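(* Let $A\in\mathbb{R}^{m\times n}$, $b\in\mathbb{R}^m$, $f(x)=\frac12\|Ax-b\|^2$, and let $x^k,x^{k-1}\in\mathbb{R}^n$ with $\nabla f(x^k)\neq 0$ and $x^k\neq x^{k-1}$. Let $g=\nabla f(x^k)/\|\nabla f(x^k)\|$, $d=(x^k-x^{k-1})/\|x^k-x^{k-1}\|$, $\epsilon=g^td$, and assume $\epsilon^2<1$. Let $S_{11}=g^tA^tAg$, $S_{12}=g^tA^tAd$, $S_{22}=d^tA^tAd$, $\eta_1=1-\epsilon^2$, $\eta_2=-S_{11}-S_{22}+2\epsilon S_{12}$, $\eta_3=S_{11}S_{22}-S_{12}^2$, and $$\sigma=\frac{-\eta_2+\sqrt{\eta_2^2-4\eta_1\eta_3}}{2\eta_1}.$$ Then $\sigma\ge S_{11}$ and $\sigma\ge S_{22}$; consequently the linear system $$\begin{pmatrix}1&\epsilon\\ \epsilon&1\end{pmatrix}\begin{pmatrix}\tau\\ \rho\end{pmatrix}=\begin{pmatrix}\sqrt{\sigma-S_{11}}\\ \sqrt{\sigma-S_{22}}\,\mathrm{sgn}(\epsilon\sigma-S_{12})\end{pmatrix}$$ has a real solution $(\tau,\rho)$, so that $u=\tau g+\rho d$ exists.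
   Context: $\|\cdot\|$ denotes the Euclidean norm; $\mathrm{sgn}$ is the sign function. The discriminant $\eta_2^2-4\eta_1\eta_3$ is nonnegative under these assumptions, so $\sigma$ is a real number (the larger root of $\eta_1\sigma^2+\eta_2\sigma+\eta_3=0$). *)

From HB Require Import structures.
From mathcomp Require Import all_boot all_order all_algebra.
From mathcomp Require Import reals.
Set Implicit Arguments. Unset Strict Implicit. Unset Printing Implicit Defensive.
Import Order.TTheory GRing.Theory Num.Theory.
Local Open Scope ring_scope.

Definition dotv (R : realType) (n : nat) (u v : 'cV[R]_n) : R :=
  \sum_(i < n) u i 0 * v i 0.

Definition enorm (R : realType) (n : nat) (v : 'cV[R]_n) : R :=
  Num.sqrt (dotv v v).

Definition lsq (R : realType) (m n : nat) (A : 'M[R]_(m, n)) (b : 'cV[R]_m)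
  (x : 'cV[R]_n) : R := (enorm (A *m x - b)) ^+ 2 / 2.

Definition lsq_grad (R : realType) (m n : nat) (A : 'M[R]_(m, n))
  (b : 'cV[R]_m) (x : 'cV[R]_n) : 'cV[R]_n := A^T *m (A *m x - b).

From HB Require Import structures.
From mathcomp Require Import all_boot all_order all_algebra.
From mathcomp Require Import reals.
From mathcomp Require Import ring.
Import Order.TTheory GRing.Theory Num.Theory.
Local Open Scope ring_scope.

(* The vectors only enter through the scalars eps, S11, S12, S22, and the claim
   is a fact about the quadratic q(s) = eta1 s^2 + eta2 s + eta3.  Its leading
   coefficient eta1 = 1 - eps^2 is positive, and
   q(S11) = -(eps S11 - S12)^2 <= 0,  q(S22) = -(eps S22 - S12)^2 <= 0,
   so both S11 and S22 lie between the roots of q, hence below its larger root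
   sigma.  The system for (tau, rho) has determinant 1 - eps^2 <> 0. *)

Lemma ler_quadratic_root (R : rcfType) (a b c x : R) :
  0 < a -> a * x ^+ 2 + b * x + c <= 0 ->
  x <= (- b + Num.sqrt (b ^+ 2 - 4 * a * c)) / (2 * a).
Proof.
move=> a_gt0 qx_le0.
have discrE : b ^+ 2 - 4 * a * c
            = (2 * a * x + b) ^+ 2 - 4 * a * (a * x ^+ 2 + b * x + c) by ring.
have le_sqrt : 2 * a * x + b <= Num.sqrt (b ^+ 2 - 4 * a * c).
  apply: le_trans (ler_norm _) _.
  rewrite -sqrtr_sqr discrE; apply: ler_wsqrtr.
  by rewrite lerDl oppr_ge0 mulr_ge0_le0 // mulr_ge0 // ltW.
by rewrite ler_pdivlMr ?mulr_gt0 // mulrC addrC lerBrDr.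
Qed.

Lemma sym_system_solvable (F : fieldType) (eps a c : F) :
  1 - eps ^+ 2 != 0 ->
  exists tau rho : F, tau + eps * rho = a /\ eps * tau + rho = c.
Proof.
move=> det_neq0.
exists ((a - eps * c) / (1 - eps ^+ 2)), ((c - eps * a) / (1 - eps ^+ 2)).
by split; field.
Qed.

Section GramQuadratic.

Variables (R : realType) (eps S11 S12 S22 : R).

Let eta1 := 1 - eps ^+ 2.
Let eta2 := - S11 - S22 + 2 * eps * S12.
Let eta3 := S11 * S22 - S12 ^+ 2.

Lemma gram_quadratic_S11 :
  eta1 * S11 ^+ 2 + eta2 * S11 + eta3 = - (eps * S11 - S12) ^+ 2.
Proof. by rewrite /eta1 /eta2 /eta3; ring. Qed.

Lemma gram_quadratic_S22 :
  eta1 * S22 ^+ 2 + eta2 * S22 + eta3 = - (eps * S22 - S12) ^+ 2.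
Proof. by rewrite /eta1 /eta2 /eta3; ring. Qed.

End GramQuadratic.

Theorem claim2 (R : realType) (m n : nat) (A : 'M[R]_(m, n)) (b : 'cV[R]_m)
  (xk xk1 : 'cV[R]_n) :
  lsq_grad A b xk != 0 ->
  xk != xk1 ->
  let g := (enorm (lsq_grad A b xk))^-1 *: lsq_grad A b xk in
  let d := (enorm (xk - xk1))^-1 *: (xk - xk1) in
  let eps := dotv g d in
  eps ^+ 2 < 1 ->
  let S11 := dotv (A *m g) (A *m g) in
  let S12 := dotv (A *m g) (A *m d) in
  let S22 := dotv (A *m d) (A *m d) in
  let eta1 := 1 - eps ^+ 2 in
  let eta2 := - S11 - S22 + 2 * eps * S12 in
  let eta3 := S11 * S22 - S12 ^+ 2 in
  let sigma := (- eta2 + Num.sqrt (eta2 ^+ 2 - 4 * eta1 * eta3)) / (2 * eta1) in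
  S11 <= sigma /\ S22 <= sigma /\
  exists tau rho : R,
    tau + eps * rho = Num.sqrt (sigma - S11) /\
    eps * tau + rho = Num.sqrt (sigma - S22) * Num.sg (eps * sigma - S12).
Proof.
move=> _ _ g d eps eps2_lt1 S11 S12 S22 eta1 eta2 eta3 sigma.
have eta1_gt0 : 0 < eta1 by rewrite subr_gt0.
split; last split.
- apply: ler_quadratic_root => //.
  by rewrite gram_quadratic_S11 oppr_le0 sqr_ge0.
- apply: ler_quadratic_root => //.
  by rewrite gram_quadratic_S22 oppr_le0 sqr_ge0.
- exact: sym_system_solvable (lt0r_neq0 eta1_gt0).
Qed.
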